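(* Let $m$ be a positive integer with at least two distinct prime divisors. Then the difference graph $\mathcal{D}(\mathbb{Z}_m)$ is empty (has no edges) if and only if $m=pq$ where $p$ and $q$ are two distinct primes.
   Context: For a finite group $G$ with identity $e$: the intersection power graph $\mathcal{G}_I(G)$ has vertex set $G$, two distinct non-identity vertices $x,y$ being adjacent iff $\langle x\rangle\cap\langle y\rangle\neq\{e\}$, and $e$ being adjacent to every other vertex. The power graph $\mathcal{P}(G)$ has vertex set $G$, two distinct vertices being adjacent iff one is a power of the other. The difference graph $\mathcal{D}(G)$ is the graph on vertex set $G$ with edge set $E(\mathcal{G}_I(G))\setminus E(\mathcal{P}(G))$, with all isolated vertices removed. $\mathbb{Z}_m$ is the cyclic group of order $m$. *)

From mathcomp Require Import all_boot all_fingroup all_algebra.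
Set Implicit Arguments. Unset Strict Implicit. Unset Printing Implicit Defensive.
Local Open Scope group_scope.

Definition ipg_adj (gT : finGroupType) (x y : gT) : bool :=
  (x != y) && [|| x == 1, y == 1 | <[x]> :&: <[y]> != 1].

Definition pg_adj (gT : finGroupType) (x y : gT) : bool :=
  (x != y) && ((x \in <[y]>) || (y \in <[x]>)).

(* Edges of the difference graph D(G) = G_I(G) minus P(G)
   (removing isolated vertices does not affect the edge set). *)
Definition diff_adj (gT : finGroupType) (x y : gT) : bool :=
  ipg_adj x y && ~~ pg_adj x y.

Definition diff_graph_empty (gT : finGroupType) : Prop :=
  forall x y : gT, ~~ diff_adj x y.

From mathcomp Require Import all_boot all_fingroup all_algebra.
From mathcomp Require Import all_solvable.

Set Implicit Arguments.
Unset Strict Implicit.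
Unset Printing Implicit Defensive.

(* If m = pq, every element of Z_m has order 1, p, q or pq; an element of
   prime order lies in every cyclic subgroup it meets nontrivially, and an
   element of order pq generates everything, so intersection adjacency
   implies power adjacency.  Conversely, if pq divides m properly, some
   prime r makes pqr divide m; swapping p and q if r = q, the elements of
   orders pq and pr share the subgroup of order p, yet neither order
   divides the other, so they form an edge of the difference graph. *)

Lemma dvdn_mul_prime2 (p q d : nat) : prime p -> prime q -> d %| p * q ->
  [|| d == 1, d == p, d == q | d == p * q].
Proof.
move=> p_pr q_pr; have [p_d | p_nd] := boolP (p %| d).
  rewrite -(divnK p_d) mulnC dvdn_pmul2l ?prime_gt0 //.
  by case/primeP: q_pr => _ /[apply] /orP[] /eqP ->; rewrite ?muln1 eqxx ?orbT.
rewrite Gauss_dvdr; last by rewrite coprime_sym prime_coprime.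
by case/primeP: q_pr => _ /[apply] /orP[] ->; rewrite ?orbT.
Qed.

Lemma exists_prime_mul_dvdn (d m : nat) : 0 < m -> d %| m -> d != m ->
  exists2 r, prime r & d * r %| m.
Proof.
move=> m_gt0 d_m d_neq_m; have k_gt1 : 1 < m %/ d.
  rewrite -(divnK d_m) in m_gt0 d_neq_m.
  by case: (m %/ d) m_gt0 d_neq_m => [|[|k]] //; rewrite mul1n eqxx.
exists (pdiv (m %/ d)); first exact: pdiv_prime.
by rewrite -{2}(divnK d_m) mulnC dvdn_pmul2r ?pdiv_dvd // (dvdn_gt0 m_gt0).
Qed.

Lemma two_primes_dvdn (m : nat) : 1 < size (primes m) ->
  exists p q, [/\ prime p, prime q, p != q & p * q %| m].
Proof.
case E: (primes m) (primes_uniq m) => [|p [|q s]] //.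
move=> /andP[/norP[p_neq_q _] _] _.
have [p_pr _ p_dvd] : [/\ prime p, 0 < m & p %| m].
  by apply/and3P; rewrite -mem_primes E inE eqxx.
have [q_pr _ q_dvd] : [/\ prime q, 0 < m & q %| m].
  by apply/and3P; rewrite -mem_primes E !inE eqxx orbT.
exists p, q; split=> //; rewrite Gauss_dvd ?p_dvd //.
by rewrite prime_coprime // dvdn_prime2.
Qed.

Local Open Scope group_scope.

Section DifferenceGraph.

Variable gT : finGroupType.
Implicit Types x y z g : gT.

Lemma orderX_divn g (d : nat) : (d %| #[g])%N -> #[g ^+ (#[g] %/ d)] = d.
Proof.
by move=> d_g; rewrite orderXdiv ?dvdn_div // divnA // mulKn.
Qed.

Lemma order_dvdn_mem_cycle g x y : x \in <[g]> -> y \in <[g]> ->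
  (#[y] %| #[x])%N -> y \in <[x]>.
Proof.
move=> gx gy; rewrite -cycle_subG.
by rewrite -(cardSg_cyclic (cycle_cyclic g)) ?cycle_subG.
Qed.

Lemma diff_adj_of_common x y z : z != 1 -> z \in <[x]> -> z \in <[y]> ->
  ~~ (#[x] %| #[y])%N -> ~~ (#[y] %| #[x])%N -> diff_adj x y.
Proof.
move=> z_neq1 xz yz x_ndvd y_ndvd.
have mem_ndvd (u v : gT) : ~~ (#[u] %| #[v])%N -> u \notin <[v]>.
  by apply: contra; rewrite -cycle_subG => /cardSg.
have x_neq_y : x != y by apply: contraNneq x_ndvd => ->.
rewrite /diff_adj /ipg_adj /pg_adj x_neq_y.
rewrite (negbTE (mem_ndvd _ _ x_ndvd)) (negbTE (mem_ndvd _ _ y_ndvd)) /= andbT.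
apply/orP; right; apply/orP; right.
by apply/trivgPn; exists z; rewrite ?inE ?xz.
Qed.

Lemma exists_diff_adj_cycle g (p q r : nat) :
  prime p -> prime q -> prime r -> q != r -> (p * q * r %| #[g])%N ->
  exists x y : gT, diff_adj x y.
Proof.
move=> p_pr q_pr r_pr q_neq_r pqr_g.
have p_gt0 := prime_gt0 p_pr.
have pq_g : (p * q %| #[g])%N by apply: dvdn_trans pqr_g; apply: dvdn_mulr.
have pr_g : (p * r %| #[g])%N.
  by apply: dvdn_trans pqr_g; rewrite mulnAC dvdn_mulr.
have p_g : (p %| #[g])%N by apply: dvdn_trans pq_g; apply: dvdn_mulr.
set x := g ^+ (#[g] %/ (p * q)); set y := g ^+ (#[g] %/ (p * r)).
set z := g ^+ (#[g] %/ p).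
have [[ox oy] oz] := (orderX_divn pq_g, orderX_divn pr_g, orderX_divn p_g).
exists x, y; apply: (@diff_adj_of_common _ _ z).
- by rewrite -order_eq1 oz gtn_eqF ?prime_gt1.
- apply: (order_dvdn_mem_cycle (mem_cycle g _)); first exact: mem_cycle.
  by rewrite oz ox dvdn_mulr.
- apply: (order_dvdn_mem_cycle (mem_cycle g _)); first exact: mem_cycle.
  by rewrite oz oy dvdn_mulr.
- by rewrite ox oy dvdn_pmul2l // dvdn_prime2.
- by rewrite ox oy dvdn_pmul2l // dvdn_prime2 // eq_sym.
Qed.

Lemma diff_graph_empty_card_mul_prime2 (p q : nat) :
  prime p -> prime q -> #|gT| = (p * q)%N -> diff_graph_empty gT.
Proof.
move=> p_pr q_pr cardG x y; apply/negP; rewrite /diff_adj /ipg_adj /pg_adj.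
case/andP=> /andP[-> /= adj]; apply/negP/negPn.
have [-> | x_neq1] := eqVneq x 1; first by rewrite group1.
rewrite (negbTE x_neq1) /= in adj.
case/orP: adj => [/eqP -> | meet]; first by rewrite group1 orbT.
have /(dvdn_mul_prime2 p_pr q_pr) : (#[x] %| p * q)%N.
  by rewrite -cardG -cardsT order_dvdG ?inE.
case/or4P=> /eqP ox.
- by rewrite -order_eq1 ox eqxx in x_neq1.
- by rewrite -cycle_subG prime_meetG // -orderE ox.
- by rewrite -cycle_subG prime_meetG // -orderE ox.
- have -> : <[x]> = [set: gT].
    by apply/eqP; rewrite eqEcard subsetT cardsT -orderE ox cardG leqnn.
  by rewrite in_setT orbT.
Qed.

End DifferenceGraph.

Local Close Scope group_scope.

(* 'Z_m is the cyclic group Z_m under addition (m >= 2 here, since m has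
   at least two distinct prime divisors). *)
Theorem theorem4p3 (m : nat) :
  0 < m -> 2 <= size (primes m) ->
  (diff_graph_empty 'Z_m <->
   exists p q : nat, [/\ prime p, prime q, p != q & m = p * q]).
Proof.
case: m => [|[|n]] // _ /two_primes_dvdn [p [q [p_pr q_pr p_neq_q pq_m]]].
split=> [empty | [p' [q' [p'_pr q'_pr _ m_eq]]]]; last first.
  apply: (diff_graph_empty_card_mul_prime2 p'_pr q'_pr).
  by rewrite card_ord m_eq.
exists p, q; split=> //; apply/eqP; rewrite eq_sym; apply: contraT => pq_neq.
have [r r_pr pqr_m] := exists_prime_mul_dvdn (ltn0Sn _) pq_m pq_neq.
rewrite -(order_Zp1 n.+1) in pqr_m.
have [x [y xy]] : exists x y : 'Z_n.+2, diff_adj x y.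
  have [q_eq_r | q_neq_r] := eqVneq q r.
    rewrite -q_eq_r (mulnC p) in pqr_m.
    exact: (exists_diff_adj_cycle q_pr p_pr q_pr p_neq_q pqr_m).
  exact: (exists_diff_adj_cycle p_pr q_pr r_pr q_neq_r pqr_m).
by have := empty x y; rewrite xy.
Qed.
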